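(* Let $\overline{P}$ be a Preparata code of length $n$, let $x\in\overline{P}$, let $m,l,k\in\mathrm{supp}(x)$, and let $u,v$ be distinct codewords of $\overline{P}$, both at Hamming distance $6$ from $x$ and both having zeros in positions $m,l,k$. Then there is no coordinate in $\mathrm{supp}(x)\setminus\{m,l,k\}$ in which both $u$ and $v$ are zero, and there is no coordinate in $\{1,\ldots,n\}\setminus\mathrm{supp}(x)$ in which both $u$ and $v$ are one.
   Context: $E^n$ is the set of binary vectors of length $n$ with the Hamming distance; $\mathrm{supp}(x)=\{k:x_k=1\}$. A Preparata code is a binary code of length $n=2^m$ ($m\ge 4$ even) with minimum distance $6$ and maximum possible cardinality among binary codes of that length and minimum distance. *)

From mathcomp Require Import all_boot.
Set Implicit Arguments. Unset Strict Implicit. Unset Printing Implicit Defensive.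

(* Binary words of length n: E^n, coordinates indexed by 'I_n (= {0..n-1}). *)
Definition word (n : nat) := {ffun 'I_n -> bool}.

Definition supp n (x : word n) : {set 'I_n} := [set i | x i].

Definition hdist n (x y : word n) : nat := #|[set i | x i != y i]|.

Definition code (n : nat) := {set word n}.

Definition min_dist_ge n (C : code n) (d : nat) : Prop :=
  forall x y, x \in C -> y \in C -> x != y -> d <= hdist x y.

Definition min_dist n (C : code n) (d : nat) : Prop :=
  min_dist_ge C d /\ exists x y, [/\ x \in C, y \in C, x != y & hdist x y = d].

Definition preparata n (C : code n) : Prop :=
  [/\ exists m, [/\ 4 <= m, ~~ odd m & n = 2 ^ m],
      min_dist C 6 &
      forall C' : code n, min_dist_ge C' 6 -> #|C'| <= #|C| ].

(* For binary words, [u i != v i] holds exactly when one of [u], [v] differs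
   from [x] at [i], so [d(x,u) + d(x,v) = d(u,v) + 2 t], where [t] counts the
   coordinates at which [u] and [v] both differ from [x].  With
   [d(x,u) = d(x,v) = 6] and [d(u,v) >= 6] this gives [t <= 3]; since [u] and
   [v] already both differ from [x] at [a], [b], [c], they agree with [x]
   everywhere else, which is both claims. *)
From mathcomp Require Import all_boot zify.

Set Implicit Arguments.
Unset Strict Implicit.
Unset Printing Implicit Defensive.

Definition common_flips n (x u v : word n) : {set 'I_n} :=
  [set i | (x i != u i) && (x i != v i)].

Lemma hdistD_common_flips n (x u v : word n) :
  hdist x u + hdist x v = hdist u v + 2 * #|common_flips x u v|.
Proof.
rewrite /hdist; set Du := [set i | x i != u i]; set Dv := [set i | x i != v i].
have -> : common_flips x u v = Du :&: Dv by apply/setP => i; rewrite !inE.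
have -> : [set i | u i != v i] = (Du :|: Dv) :\: (Du :&: Dv).
  by apply/setP => i; rewrite !inE; case: (x i); case: (u i); case: (v i).
have DuvI : Du :&: Dv \subset Du :|: Dv by rewrite subIset // subsetUl.
rewrite -cardsUI mul2n -addnn addnA; congr (_ + _).
by rewrite -(cardsID (Du :&: Dv) (Du :|: Dv)) (setIidPr DuvI) addnC.
Qed.

Lemma card_common_flips_le3 n (x u v : word n) :
  6 <= hdist u v -> hdist x u = 6 -> hdist x v = 6 ->
  #|common_flips x u v| <= 3.
Proof.
move=> duv dxu dxv; have := hdistD_common_flips x u v.
by rewrite dxu dxv; lia.
Qed.

Lemma cards3 (T : finType) (a b c : T) :
  a != b -> a != c -> b != c -> #|[set a; b; c]| = 3.
Proof.
move=> ab ac bc; rewrite setUC cardsU1 cards2 !inE ab.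
by rewrite (eq_sym c a) (eq_sym c b) (negbTE ac) (negbTE bc).
Qed.

Lemma subset3_card_le3 (T : finType) (S : {set T}) (a b c : T) :
  a != b -> a != c -> b != c -> a \in S -> b \in S -> c \in S ->
  #|S| <= 3 -> S = [set a; b; c].
Proof.
move=> ab ac bc aS bS cS S_le3; apply/esym/eqP.
rewrite eqEcard cards3 // S_le3 andbT.
by apply/subsetP => i; rewrite !inE => /orP [/orP [] | ] /eqP ->.
Qed.

Theorem lemma7 (n : nat) (P : code n) (x u v : word n) (a b c : 'I_n) :
  preparata P ->
  x \in P ->
  a \in supp x -> b \in supp x -> c \in supp x ->
  a != b -> a != c -> b != c ->
  u \in P -> v \in P -> u != v ->
  hdist x u = 6 -> hdist x v = 6 ->
  ~~ u a -> ~~ u b -> ~~ u c ->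
  ~~ v a -> ~~ v b -> ~~ v c ->
  (forall i, i \in supp x :\: [set a; b; c] -> u i || v i) /\
  (forall i, i \notin supp x -> ~~ (u i && v i)).
Proof.
case=> _ [min6 _] _ _ ax bx cx ab ac bc uP vP uv dxu dxv ua ub uc va vb vc.
rewrite !inE in ax bx cx.
have flips_le3 := card_common_flips_le3 (min6 _ _ uP vP uv) dxu dxv.
have flips_abc : common_flips x u v = [set a; b; c].
  by apply: (subset3_card_le3 ab ac bc _ _ _ flips_le3);
    rewrite inE ?ax ?bx ?cx ?(negbTE ua) ?(negbTE ub) ?(negbTE uc)
      ?(negbTE va) ?(negbTE vb) ?(negbTE vc).
have flip_abc i : x i != u i -> x i != v i -> i \in [set a; b; c].
  by move=> xui xvi; rewrite -flips_abc inE xui xvi.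
split=> i.
- rewrite in_setD => /andP [i_abc]; rewrite inE => xi.
  apply: contraT => /norP [/negbTE ui /negbTE vi].
  have := flip_abc i; rewrite xi ui vi => /(_ isT isT).
  by rewrite (negbTE i_abc).
- rewrite inE => /negbTE xi; apply/negP => /andP [ui vi].
  have := flip_abc i; rewrite xi ui vi !inE => /(_ isT isT).
  by case/orP => [/orP [] | ] /eqP eq_i; move: xi; rewrite eq_i ?ax ?bx ?cx.
Qed.
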